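(* Let $m$ and $n$ be positive integers with $n$ composite, and suppose that (i) $n$ is squarefree, and (ii) for every prime divisor $p$ of $n$ and every integer $r$ with $1\le r\le m$ there is an integer $i\ge 0$ such that $n\equiv p^i \pmod{p^r-1}$. Then for every integer $r$ with $1\le r\le m$ we have $\binom{n}{r}\equiv 0 \pmod n$. *)

From mathcomp Require Import all_boot.
Set Implicit Arguments. Unset Strict Implicit. Unset Printing Implicit Defensive.

Definition squarefree (n : nat) : Prop :=
  forall p : nat, prime p -> ~~ (p * p %| n).

Definition composite (n : nat) : Prop := 1 < n /\ ~~ prime n.

From mathcomp Require Import all_boot cyclic.

Set Implicit Arguments.
Unset Strict Implicit.
Unset Printing Implicit Defensive.

(* Every prime factor [p] of [n] exceeds [m]: otherwise pick a second prime
   factor [q] of the squarefree composite [n] and apply the hypothesis with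
   [r = p - 1].  By Fermat, [p] divides [q ^ (p - 1) - 1], so [n] would be
   congruent to a power of [q] modulo [p], contradicting [p %| n].  Hence every
   [r] in [1, m] is coprime to [n], and [n] divides
   [r * 'C(n, r) = n * 'C(n - 1, r - 1)]. *)

Lemma prime_dvd_exp_pred_sub1 p q : prime p -> coprime q p -> p %| q ^ p.-1 - 1.
Proof.
move=> p_pr co_qp; have := Euler_exp_totient co_qp.
rewrite totient_prime // => /eqP; rewrite eqn_mod_dvd // expn_gt0.
by case: q co_qp => //; rewrite /coprime gcd0n => /eqP p_eq1; rewrite p_eq1 in p_pr.
Qed.

Lemma pow_residue_not_dvdn p q n i : prime p -> coprime q p ->
  n = q ^ i %[mod q ^ p.-1 - 1] -> ~~ (p %| n).
Proof.
move=> p_pr co_qp n_res; have p_dvd := prime_dvd_exp_pred_sub1 p_pr co_qp.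
have -> : p %| n = (p %| q ^ i).
  by rewrite /dvdn -(modn_dvdm n p_dvd) -(modn_dvdm (q ^ i) p_dvd) n_res.
by rewrite -prime_coprime // coprime_sym coprimeXl.
Qed.

Lemma exists_other_prime_divisor n p : 0 < n -> n != p -> prime p -> p %| n ->
  ~~ (p * p %| n) -> exists q, [/\ prime q, q %| n & q != p].
Proof.
move=> n_gt0 n_neq_p p_pr p_dvd_n p2_ndvd_n.
have n_eq : n %/ p * p = n := divnK p_dvd_n.
have np_gt1 : 1 < n %/ p.
  case: (n %/ p) n_eq => [|[|//]] n_eq; last by rewrite -n_eq mul1n eqxx in n_neq_p.
  by rewrite -n_eq in n_gt0.
exists (pdiv (n %/ p)); split; first exact: pdiv_prime.
  exact: dvdn_trans (pdiv_dvd _) (dvdn_div p_dvd_n).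
apply: contraNneq p2_ndvd_n => q_eq_p.
by rewrite -n_eq dvdn_mul // -{1}q_eq_p pdiv_dvd.
Qed.

Lemma coprime_of_prime_divisors_gt m n r :
  (forall p, prime p -> p %| n -> m < p) -> 0 < r <= m -> coprime n r.
Proof.
move=> big_primes /andP[r_gt0 r_le_m]; apply: contraT => not_co.
have gcd_gt1 : 1 < gcdn n r by rewrite ltn_neqAle eq_sym not_co gcdn_gt0 r_gt0 orbT.
have p_dvd_gcd := pdiv_dvd (gcdn n r).
have := big_primes _ (pdiv_prime gcd_gt1) (dvdn_trans p_dvd_gcd (dvdn_gcdl _ _)).
have p_le_r := dvdn_leq r_gt0 (dvdn_trans p_dvd_gcd (dvdn_gcdr _ _)).
by rewrite ltnNge (leq_trans p_le_r r_le_m).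
Qed.

Lemma dvdn_bin_coprime n r : 0 < r -> coprime n r -> n %| 'C(n, r).
Proof.
case: r => // r _ co_nr.
by rewrite -(Gauss_dvdr _ co_nr) -mul_bin_diag dvdn_mulr.
Qed.

Lemma prime_divisors_gt_of_pow_residues m n :
  composite n -> squarefree n ->
  (forall p r, prime p -> p %| n -> 1 <= r <= m ->
     exists i, n = p ^ i %[mod p ^ r - 1]) ->
  forall p, prime p -> p %| n -> m < p.
Proof.
move=> [n_gt1 n_not_prime] n_sqf n_res p p_pr p_dvd_n.
rewrite ltnNge; apply/negP => p_le_m.
have n_neq_p : n != p by apply: contraNneq n_not_prime => ->.
have [q [q_pr q_dvd_n q_neq_p]] :=
  exists_other_prime_divisor (ltnW n_gt1) n_neq_p p_pr p_dvd_n (n_sqf p p_pr).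
have pred_p_range : 1 <= p.-1 <= m.
  by rewrite -subn1 subn_gt0 prime_gt1 // (leq_trans (leq_subr 1 p) p_le_m).
have [i n_res_q] := n_res q p.-1 q_pr q_dvd_n pred_p_range.
have co_qp : coprime q p by rewrite prime_coprime // dvdn_prime2.
by rewrite (negPf (pow_residue_not_dvdn p_pr co_qp n_res_q)) in p_dvd_n.
Qed.

Theorem lemma2 (m n : nat) :
  0 < m -> composite n -> squarefree n ->
  (forall p r : nat, prime p -> p %| n -> 1 <= r <= m ->
     exists i : nat, n = p ^ i %[mod p ^ r - 1]) ->
  forall r : nat, 1 <= r <= m -> 'C(n, r) = 0 %[mod n].
Proof.
move=> _ n_comp n_sqf n_res r r_range.
have big_primes := prime_divisors_gt_of_pow_residues n_comp n_sqf n_res.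
have [r_gt0 _] := andP r_range.
apply/eqP; rewrite mod0n.
exact: dvdn_bin_coprime r_gt0 (coprime_of_prime_divisors_gt big_primes r_range).
Qed.
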